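(* Let $A$ be a real $m\times n$ matrix, $\mathbf b\in\mathbb R^m$, $\mathbf c\in\mathbb R^n$ (row vector), such that the linear program $\max\mathbf c\mathbf x$ s.t. $A\mathbf x\le\mathbf b$, $\mathbf x\ge0$ has unique optimal primal and dual solutions $\mathbf x^*$, $\mathbf y^*$. Let $\lambda=\min(\alpha_P,\alpha_D,\beta_P,\beta_D)$. Then for every primal feasible $\mathbf x$, \[ \|\mathbf x^*-\mathbf x\|_\infty\le\mathbf c(\mathbf x^*-\mathbf x)\left(\frac{1+\|A\|}{\lambda\min(\gamma,1)}\right). \]
   Context: The dual is $\min\mathbf y\mathbf b$ s.t. $\mathbf yA\ge\mathbf c$, $\mathbf y\ge0$. $U=\{i:x^*_i>0\}$, $V=\{j:y^*_j>0\}$, $\bar U,\bar V$ complements. $\alpha_P=\min_{i\in U}x^*_i$, $\alpha_D=\min_{j\in V}y^*_j$, $\beta_P=\min_{j\in\bar V}(b_j-A_{j,:}\mathbf x^* )$, $\beta_D=\min_{i\in\bar U}(\mathbf y^*A_{:,i}-c_i)$, $\gamma=\min_{k\in U}\mathrm{dist}(A_{V,k},\mathrm{span}(A_{V,U\setminus\{k\}}))$, where $A_{V,k}$ is column $k$ restricted to rows $V$ and $\mathrm{span}(A_{V,U\setminus\{k\}})$ is the span of the columns indexed by $U\setminus\{k\}$ restricted to rows $V$. $\|A\|$ is the spectral norm and $\|\cdot\|_\infty$ the max-norm. *)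

From HB Require Import structures.
From mathcomp Require Import all_boot all_order all_algebra.
From mathcomp Require Import boolp classical_sets reals constructive_ereal.
Set Implicit Arguments. Unset Strict Implicit. Unset Printing Implicit Defensive.
Import Order.TTheory GRing.Theory Num.Theory.
Local Open Scope ring_scope.

Section LPDefs.
Variable R : realType.
Variables m n : nat.

Definition lemx p q (M N : 'M[R]_(p, q)) : Prop := forall i j, M i j <= N i j.

Definition primal_feasible (A : 'M[R]_(m, n)) (b : 'cV[R]_m) (x : 'cV[R]_n) :=
  lemx (A *m x) b /\ lemx 0 x.
Definition primal_optimal A b (c : 'rV[R]_n) x :=
  primal_feasible A b x /\
  forall x', primal_feasible A b x' -> (c *m x') 0 0 <= (c *m x) 0 0.

Definition dual_feasible (A : 'M[R]_(m, n)) (c : 'rV[R]_n) (y : 'rV[R]_m) :=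
  lemx c (y *m A) /\ lemx 0 y.
Definition dual_optimal A (b : 'cV[R]_m) c y :=
  dual_feasible A c y /\
  forall y', dual_feasible A c y' -> (y *m b) 0 0 <= (y' *m b) 0 0.

Definition normInf (v : 'cV[R]_n) : R := \big[Num.max/0]_(i < n) `|v i 0|.

Definition norm2 p (v : 'cV[R]_p) : R := Num.sqrt (\sum_(i < p) v i 0 ^+ 2).

Definition specnorm (A : 'M[R]_(m, n)) : R :=
  sup [set e : R | exists x : 'cV[R]_n, norm2 x <= 1 /\ e = norm2 (A *m x)]%classic.

Definition Uset (xs : 'cV[R]_n) : {set 'I_n} := [set i | 0 < xs i 0].
Definition Vset (ys : 'rV[R]_m) : {set 'I_m} := [set j | 0 < ys 0 j].

(* minima over (possibly empty) finite index sets, with min of empty = +oo *)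
Definition alphaP xs : \bar R :=
  \big[mine/+oo%E]_(i in Uset xs) (xs i 0)%:E.
Definition alphaD ys : \bar R :=
  \big[mine/+oo%E]_(j in Vset ys) (ys 0 j)%:E.
Definition betaP (A : 'M[R]_(m, n)) (b : 'cV[R]_m) (xs : 'cV[R]_n) (ys : 'rV[R]_m) : \bar R :=
  \big[mine/+oo%E]_(j in ~: Vset ys) (b j 0 - (A *m xs) j 0)%:E.
Definition betaD (A : 'M[R]_(m, n)) (c : 'rV[R]_n) (xs : 'cV[R]_n) (ys : 'rV[R]_m) : \bar R :=
  \big[mine/+oo%E]_(i in ~: Uset xs) ((ys *m A) 0 i - c 0 i)%:E.

(* Euclidean distance, in the coordinates indexed by V, from column k of A
   to the span of the columns of A indexed by U \ {k} *)
Definition dist_col (A : 'M[R]_(m, n)) (V : {set 'I_m}) (U : {set 'I_n})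
    (k : 'I_n) : R :=
  inf [set d : R | exists a : 'I_n -> R,
    d = Num.sqrt (\sum_(j in V)
          (A j k - \sum_(i in U :\ k) a i * A j i) ^+ 2)]%classic.

Definition gammaA (A : 'M[R]_(m, n)) (xs : 'cV[R]_n) (ys : 'rV[R]_m) : \bar R :=
  \big[mine/+oo%E]_(k in Uset xs) (dist_col A (Vset ys) (Uset xs) k)%:E.

Definition lambdaA (A : 'M[R]_(m, n)) (b : 'cV[R]_m) (c : 'rV[R]_n) (xs : 'cV[R]_n) (ys : 'rV[R]_m) : \bar R :=
  mine (mine (alphaP xs) (alphaD ys)) (mine (betaP A b xs ys) (betaD A c xs ys)).

End LPDefs.

(* Strong duality (via Farkas' lemma, proved by Fourier-Motzkin elimination) turns the
   objective gap into c (x* - x) = sum_j y*_j s_j + sum_i r_i x_i, where s = b - A x >= 0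
   are the slacks and r = y* A - c >= 0 the reduced costs; hence the gap is at least
   lambda (sum_{j in V} s_j + sum_{i notin U} x_i).  Off the support U of x* the error
   |x*_i - x_i| = x_i is bounded by the second sum.  On U, complementary slackness gives
   A_{V,U} (x* - x)_U = s_V + A_V xbar, where xbar is x with the coordinates in U zeroed;
   the Euclidean norm of the left side is at least gamma |x*_k - x_k| for every k in U,
   and that of the right side at most sum_V s_j + ||A|| sum_{i notin U} x_i. *)

From HB Require Import structures.
From mathcomp Require Import all_boot all_order all_algebra.
From mathcomp Require Import ring lra.
From mathcomp Require Import boolp classical_sets reals constructive_ereal.
From Stdlib Require List.
Set Implicit Arguments. Unset Strict Implicit. Unset Printing Implicit Defensive.
Import Order.TTheory GRing.Theory Num.Theory.
Local Open Scope ring_scope.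

Section FourierMotzkin.
Variable R : realFieldType.

(* [(a, b)] stands for the inequality [\sum_i a i * x i <= b]; coefficients are
   indexed by [nat] so that the last variable can be eliminated by induction. *)
Local Notation ineq := ((nat -> R) * R)%type.

Definition dotn (n : nat) (a x : nat -> R) : R := \sum_(i < n) a i * x i.

Definition satisfies n (L : list ineq) (x : nat -> R) :=
  forall e, List.In e L -> dotn n e.1 x <= e.2.

Inductive conic (L : list ineq) : ineq -> Prop :=
| conic_in e : List.In e L -> conic L e
| conic_comb a1 b1 a2 b2 s1 s2 :
    conic L (a1, b1) -> conic L (a2, b2) -> 0 <= s1 -> 0 <= s2 ->
    conic L (fun k => s1 * a1 k + s2 * a2 k, s1 * b1 + s2 * b2).

Lemma conic_trans L L' e :
  (forall e', List.In e' L' -> conic L e') -> conic L' e -> conic L e.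
Proof. by move=> sub; elim=> [e' /sub //|*]; exact: conic_comb. Qed.

Lemma conic_coord0 L k e :
  (forall e', List.In e' L -> e'.1 k = 0) -> conic L e -> e.1 k = 0.
Proof. by move=> L0; elim=> [e' /L0 //|/= ? ? ? ? ? ? _ -> _ -> _ _]; rewrite !mulr0 addr0. Qed.

Lemma dotnS n a x : dotn n.+1 a x = dotn n a x + a n * x n.
Proof. exact: big_ord_recr. Qed.

Lemma dotn_comb n s1 s2 a1 a2 x :
  dotn n (fun k => s1 * a1 k + s2 * a2 k) x = s1 * dotn n a1 x + s2 * dotn n a2 x.
Proof. by rewrite /dotn !mulr_sumr -big_split /=; apply: eq_bigr => i _; ring. Qed.

Lemma eq_dotn n a x x' :
  (forall k, (k < n)%N -> x k = x' k) -> dotn n a x = dotn n a x'.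
Proof. by move=> xx'; apply: eq_bigr => i _; rewrite xx'. Qed.

Lemma separating_value (T1 T2 : Type) (N : list T1) (P : list T2) f g :
  (forall q p, List.In q N -> List.In p P -> f q <= g p :> R) ->
  exists t, (forall q, List.In q N -> f q <= t) /\ (forall p, List.In p P -> t <= g p).
Proof.
elim: N => [|q N IH] fg.
  elim: P {fg} => [|p P [t [_ tP]]]; first by exists 0.
  exists (Num.min t (g p)); split=> // p' [<-|/tP tp']; first by rewrite ge_min lexx orbT.
  by rewrite ge_min tp'.
have [|t [Nt tP]] := IH; first by move=> q' p Nq' Pp; apply: fg => //; right.
exists (Num.max (f q) t); split=> [q' [<-|/Nt q't]|p Pp]; rewrite ?le_max ?lexx ?q't ?orbT //.
by rewrite ge_max tP // andbT; apply: fg => //; left.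
Qed.

Section Elimination.
Variable k : nat.

(* The positive combination of [p] (with [p.1 k > 0]) and [q] (with [q.1 k < 0])
   in which the coefficient of the variable [k] cancels. *)
Definition fm_combine (p q : ineq) : ineq :=
  (fun i => - q.1 k * p.1 i + p.1 k * q.1 i, - q.1 k * p.2 + p.1 k * q.2).

Definition fm_eliminate (L : list ineq) : list ineq :=
  List.app (List.filter (fun e => e.1 k == 0) L)
    (List.flat_map (fun p => List.map (fm_combine p) (List.filter (fun e => e.1 k < 0) L))
       (List.filter (fun e => 0 < e.1 k) L)).

Lemma fm_eliminate_conic L e :
  List.In e (fm_eliminate L) -> conic L e /\ e.1 k = 0.
Proof.
case/List.in_app_iff=> [/List.filter_In [Le /eqP ek0]|]; first by split=> //; exact: conic_in.
case/List.in_flat_map=> -[pa pb] [/List.filter_In [Lp /= pk]].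
case/List.in_map_iff=> -[qa qb] [<- /List.filter_In [Lq /= qk]].
split; last by rewrite /=; ring.
by apply: conic_comb; rewrite ?oppr_ge0 ?ltW //; exact: conic_in.
Qed.

Lemma fm_eliminate_lift L x :
  satisfies k (fm_eliminate L) x -> exists x', satisfies k.+1 L x'.
Proof.
move=> satx.
pose bound (e : ineq) := (e.2 - dotn k e.1 x) / e.1 k.
have [|t [Nt tP]] := @separating_value _ _ (List.filter (fun e => e.1 k < 0) L)
                                      (List.filter (fun e => 0 < e.1 k) L) bound bound.
  move=> q p /List.filter_In [Lq qk] /List.filter_In [Lp pk].
  have /satx : List.In (fm_combine p q) (fm_eliminate L).
    apply/List.in_app_iff; right; apply/List.in_flat_map; exists p.
    split; first exact/List.filter_In.
    by apply/List.in_map_iff; exists q; split=> //; apply/List.filter_In.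
  rewrite /= dotn_comb => pq; rewrite /bound ler_pdivlMr // mulrAC ler_ndivrMr //; nra.
exists (fun i => if i == k then t else x i) => e Le.
rewrite dotnS eqxx (@eq_dotn k _ _ x); last by move=> i ik; rewrite ltn_eqF.
case: (ltgtP (e.1 k) 0) => ek.
- have /Nt : List.In e (List.filter (fun e => e.1 k < 0) L) by apply/List.filter_In.
  by rewrite ler_ndivrMr //; lra.
- have /tP : List.In e (List.filter (fun e => 0 < e.1 k) L) by apply/List.filter_In.
  by rewrite ler_pdivlMr //; lra.
- rewrite ek mul0r addr0; apply: satx; apply/List.in_app_iff; left.
  by apply/List.filter_In; split=> //; apply/eqP.
Qed.

End Elimination.

Theorem farkas_certificate n L :
  ~ (exists x, satisfies n L x) ->
  exists a b, conic L (a, b) /\ (forall k, (k < n)%N -> a k = 0) /\ b < 0.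
Proof.
elim: n L => [|n IH] L infeasible.
  have [[a b] [La b_neg]] : exists e, List.In e L /\ e.2 < 0.
    apply: contra_notP infeasible => nonneg; exists (fun _ => 0) => e Le.
    by rewrite /dotn big_ord0 leNgt; apply/negP => e_neg; apply: nonneg; exists e.
  by exists a, b; split; first exact: conic_in.
have [[x satx]|infeasible'] := pselect (exists x, satisfies n (fm_eliminate n L) x).
  by case: infeasible; exact: fm_eliminate_lift satx.
have [a [b [cert [a0 b_neg]]]] := IH _ infeasible'.
exists a, b; split; first by apply: conic_trans cert => e /fm_eliminate_conic [].
split=> // k; rewrite ltnS leq_eqVlt => /orP [/eqP ->|/a0 //].
by apply: (@conic_coord0 _ n _ _ cert) => e /fm_eliminate_conic [].
Qed.

End FourierMotzkin.

Lemma In_mem (T : eqType) (x : T) (s : seq T) : x \in s -> List.In x s.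
Proof. by elim: s => //= y s IH; rewrite in_cons => /orP [/eqP ->|/IH]; [left|right]. Qed.

Section Duality.
Variables (R : realType) (m n : nat).
Implicit Types (A : 'M[R]_(m, n)) (b : 'cV[R]_m) (c : 'rV[R]_n).

Lemma ler_wpmulmx2l p (y : 'rV[R]_p) (u v : 'cV[R]_p) :
  lemx 0 y -> lemx u v -> (y *m u) 0 0 <= (y *m v) 0 0.
Proof.
move=> y0 uv; rewrite !mxE; apply: ler_sum => j _.
by apply: ler_wpM2l; [have := y0 0 j; rewrite mxE | exact: uv].
Qed.

Lemma ler_wpmulmx2r p (u v : 'rV[R]_p) (x : 'cV[R]_p) :
  lemx 0 x -> lemx u v -> (u *m x) 0 0 <= (v *m x) 0 0.
Proof.
move=> x0 uv; rewrite !mxE; apply: ler_sum => j _.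
by apply: ler_wpM2r; [have := x0 j 0; rewrite mxE | exact: uv].
Qed.

Lemma weak_duality A b c x y : primal_feasible A b x -> dual_feasible A c y ->
  (c *m x) 0 0 <= (y *m b) 0 0.
Proof.
move=> [Axb x0] [cyA y0]; apply: (le_trans (ler_wpmulmx2r x0 cyA)).
by rewrite -mulmxA; exact: ler_wpmulmx2l.
Qed.

Lemma mulmxBr_entry p (c : 'rV[R]_p) (x x' : 'cV[R]_p) :
  (c *m (x - x')) 0 0 = (c *m x) 0 0 - (c *m x') 0 0.
Proof. by rewrite mulmxBr [LHS]mxE [(- (c *m x')) 0 0]mxE. Qed.

Definition natfun (f : 'I_n -> R) : nat -> R := fun k => \sum_(i < n | val i == k) f i.

Lemma natfun_ord f (i : 'I_n) : natfun f i = f i.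
Proof. by rewrite /natfun (eq_bigl (pred1 i)) ?big_pred1_eq. Qed.

Lemma dotn_natfun f x : dotn n (natfun f) x = \sum_i f i * x i.
Proof. by apply: eq_bigr => i _; rewrite natfun_ord. Qed.

Definition lp_system A b c (d : R) : list ((nat -> R) * R) :=
  List.app (List.map (fun j => (natfun (fun i => A j i), b j 0)) (enum 'I_m))
  (List.app (List.map (fun k => (natfun (fun i => - (i == k)%:R), 0)) (enum 'I_n))
  [:: (natfun (fun i => - c 0 i), - d)]).

Lemma lp_system_sol A b c d x : satisfies n (lp_system A b c d) x ->
  primal_feasible A b (\col_i x i) /\ d <= (c *m \col_i x i) 0 0.
Proof.
move=> satx; split; first split=> [j k|i k].
- have /satx : List.In (natfun (fun i => A j i), b j 0) (lp_system A b c d).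
    by apply: List.in_or_app; left; apply: List.in_map; exact: In_mem (mem_enum _ j).
  by rewrite dotn_natfun ord1 mxE; under [X in _ -> X <= _]eq_bigr do rewrite mxE.
- have /satx : List.In (natfun (fun i' => - (i' == i)%:R), 0) (lp_system A b c d).
    by apply: List.in_or_app; right; apply: List.in_or_app; left; apply: List.in_map;
      exact: In_mem (mem_enum _ i).
  rewrite dotn_natfun (bigD1 i) //= eqxx big1 => [|i' /negbTE ->]; last by rewrite oppr0 mul0r.
  by rewrite addr0 mulN1r oppr_le0 ord1 !mxE.
- have /satx : List.In (natfun (fun i => - c 0 i), - d) (lp_system A b c d).
    by apply: List.in_or_app; right; apply: List.in_or_app; right; left.
  rewrite dotn_natfun mxE /=; under eq_bigr do rewrite mulNr.
  by rewrite sumrN lerN2; under [X in _ -> _ <= X]eq_bigr do rewrite mxE.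
Qed.

Lemma lp_system_conic A b c d e : conic (lp_system A b c d) e ->
  exists (y : 'rV[R]_m) (t : R), [/\ lemx 0 y, 0 <= t,
    forall i : 'I_n, e.1 i <= (y *m A) 0 i - t * c 0 i & (y *m b) 0 0 - t * d <= e.2].
Proof.
elim=> {e} [e|a1 b1 a2 b2 s1 s2 _ [y1 [t1 [y10 t10 a1y1 b1y1]]]
                              _ [y2 [t2 [y20 t20 a2y2 b2y2]]] s10 s20].
  case/List.in_app_iff=> [/List.in_map_iff [j [<- _]]|
                          /List.in_app_iff [/List.in_map_iff [k [<- _]]|[<-|//]]].
  - exists (\row_(j' < m) (j' == j)%:R), 0.
    split=> [? ?||i|]; rewrite /= ?natfun_ord ?mxE ?ler0n //;
      rewrite (bigD1 j) //= big1 ?mxE ?eqxx ?mul1r ?mul0r ?addr0 ?subr0 // => j' /negbTE j'j;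
      by rewrite mxE j'j mul0r.
  - exists 0, 0; split=> [? ?||i|]; rewrite /= ?natfun_ord ?mul0mx ?mxE ?mul0r ?subr0 //.
    by rewrite oppr_le0 ler0n.
  - by exists 0, 1; split=> [? ?||i|]; rewrite /= ?natfun_ord ?mul0mx ?mxE ?mul1r ?sub0r.
have combE p (M : 'M[R]_(m, p)) k :
    ((s1 *: y1 + s2 *: y2) *m M) 0 k = s1 * (y1 *m M) 0 k + s2 * (y2 *m M) 0 k.
  by rewrite mulmxDl -!scalemxAl !mxE.
exists (s1 *: y1 + s2 *: y2), (s1 * t1 + s2 * t2); split.
- move=> ? j; rewrite ord1 !mxE; have := y10 0 j; have := y20 0 j; rewrite !mxE => ? ?.
  by apply: addr_ge0; exact: mulr_ge0.
- by apply: addr_ge0; exact: mulr_ge0.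
- move=> i; rewrite combE /=.
  have := ler_wpM2l s10 (a1y1 i); have := ler_wpM2l s20 (a2y2 i); rewrite /=; lra.
- rewrite combE /=; have := ler_wpM2l s10 b1y1; have := ler_wpM2l s20 b2y2; rewrite /=; lra.
Qed.

Lemma strong_duality A b c xs ys : primal_optimal A b c xs -> dual_optimal A b c ys ->
  (ys *m b) 0 0 = (c *m xs) 0 0.
Proof.
move=> [xs_feas xs_opt] [ys_feas ys_opt].
(* Farkas' lemma for [A x <= b, x >= 0, c x >= c xs + eps] yields a dual solution of
   value below [c xs + eps]. *)
apply/eqP; rewrite eq_le (weak_duality xs_feas ys_feas) andbT.
apply/ler_addgt0Pr => eps eps_gt0; set d := (c *m xs) 0 0 + eps.
have infeasible : ~ (exists x, satisfies n (lp_system A b c d) x).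
  by case=> x /lp_system_sol [/xs_opt x_le d_le]; rewrite /d in d_le; lra.
have [a [beta [cert [a0 beta_lt0]]]] := farkas_certificate infeasible.
have [y [t [y0 t0 /= ayA yb]]] := lp_system_conic cert.
have tc_yA i : t * c 0 i <= (y *m A) 0 i by have := ayA i; rewrite a0 //; lra.
have [t_eq0|t_gt0] := eqVneq t 0.
  (* [y] would then certify that the primal problem is infeasible. *)
  have yAxs : ((0 : 'rV[R]_n) *m xs) 0 0 <= ((y *m A) *m xs) 0 0.
    by apply: ler_wpmulmx2r => [|? i]; [case: xs_feas | rewrite ord1 mxE -(mul0r (c 0 i)) -t_eq0].
  have yAb : (y *m (A *m xs)) 0 0 <= (y *m b) 0 0 by apply: ler_wpmulmx2l => //; case: xs_feas.
  rewrite mul0mx mxE -mulmxA in yAxs; move: yb; rewrite t_eq0 mul0r; lra.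
have {}t_gt0 : 0 < t by rewrite lt_def t_gt0.
have ys_le : (ys *m b) 0 0 <= t^-1 * (y *m b) 0 0.
  have -> : t^-1 * (y *m b) 0 0 = ((t^-1 *: y) *m b) 0 0 by rewrite -scalemxAl [RHS]mxE.
  apply: ys_opt; split=> [? i|? j]; rewrite ?ord1 -?scalemxAl !mxE.
    by rewrite mulrC ler_pdivlMr // mulrC; have := tc_yA i; rewrite mxE.
  by apply: mulr_ge0; [rewrite invr_ge0 ltW | have := y0 0 j; rewrite mxE].
have : t^-1 * (y *m b) 0 0 < d by rewrite ltr_pdivrMl //; lra.
lra.
Qed.

End Duality.

Section EuclideanSums.
Variables (R : rcfType) (I : finType) (P : pred I).
Implicit Types u v : I -> R.

Lemma sum_sqr_ge0 u : 0 <= \sum_(j | P j) u j ^+ 2.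
Proof. by apply: sumr_ge0 => j _; rewrite sqr_ge0. Qed.

Lemma sum_sqr_le_sqr_sum u :
  (forall j, P j -> 0 <= u j) -> \sum_(j | P j) u j ^+ 2 <= (\sum_(j | P j) u j) ^+ 2.
Proof.
move=> u0; suff [] : 0 <= \sum_(j | P j) u j /\
                     \sum_(j | P j) u j ^+ 2 <= (\sum_(j | P j) u j) ^+ 2 by [].
apply: (big_ind2 (fun a b => 0 <= b /\ a <= b ^+ 2)) => [|x1 x2 y1 y2 [? ?] [? ?]|j /u0 //].
  by rewrite expr0n.
by split; [exact: addr_ge0 | rewrite sqrrD; nra].
Qed.

Lemma sqrt_sum_sqr_le_sum u :
  (forall j, P j -> 0 <= u j) -> Num.sqrt (\sum_(j | P j) u j ^+ 2) <= \sum_(j | P j) u j.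
Proof.
move=> u0; have sum_ge0 : 0 <= \sum_(j | P j) u j by exact: sumr_ge0.
rewrite -(ger0_norm sum_ge0) -sqrtr_sqr ler_sqrt ?sqr_ge0 //.
exact: sum_sqr_le_sqr_sum.
Qed.

Lemma sqrt_sum_sqr_le_sum_norm u :
  Num.sqrt (\sum_(j | P j) u j ^+ 2) <= \sum_(j | P j) `|u j|.
Proof.
under eq_bigr do rewrite -real_normK ?num_real //.
exact: sqrt_sum_sqr_le_sum.
Qed.

Lemma cauchy_schwarz u v :
  (\sum_(j | P j) u j * v j) ^+ 2 <= (\sum_(j | P j) u j ^+ 2) * (\sum_(j | P j) v j ^+ 2).
Proof.
set A := \sum_(j | P j) u j ^+ 2; set B := \sum_(j | P j) v j ^+ 2.
set C := \sum_(j | P j) u j * v j.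
have [B0|B_gt0] := eqVneq B 0.
  have v0 j : P j -> v j = 0.
    move=> Pj; apply/eqP; rewrite -sqrf_eq0; apply/eqP.
    move/eqP: B0; rewrite psumr_eq0 => [/allP /(_ j (mem_index_enum j))|j' _]; last exact: sqr_ge0.
    by rewrite Pj => /eqP.
  by rewrite /C big1 ?expr0n ?B0 ?mulr0 // => j Pj; rewrite v0 ?mulr0.
have {}B_gt0 : 0 < B by rewrite lt_def B_gt0 sum_sqr_ge0.
have : 0 <= B * (A * B - C ^+ 2).
  have -> : B * (A * B - C ^+ 2) = \sum_(j | P j) (B * u j - C * v j) ^+ 2.
    rewrite [RHS](eq_bigr (fun j =>
      B ^+ 2 * u j ^+ 2 - 2 * B * C * (u j * v j) + C ^+ 2 * v j ^+ 2));
      last by move=> j _; ring.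
    by rewrite big_split /= sumrB -!mulr_sumr -/A -/B -/C; ring.
  exact: sum_sqr_ge0.
by rewrite pmulr_rge0 // subr_ge0.
Qed.

Lemma minkowski u v :
  Num.sqrt (\sum_(j | P j) (u j + v j) ^+ 2) <=
  Num.sqrt (\sum_(j | P j) u j ^+ 2) + Num.sqrt (\sum_(j | P j) v j ^+ 2).
Proof.
set A := \sum_(j | P j) u j ^+ 2; set B := \sum_(j | P j) v j ^+ 2.
set C := \sum_(j | P j) u j * v j.
have A0 : 0 <= A := sum_sqr_ge0 u; have B0 : 0 <= B := sum_sqr_ge0 v.
have AB0 : 0 <= Num.sqrt A + Num.sqrt B by rewrite addr_ge0 ?sqrtr_ge0.
rewrite -(ger0_norm AB0) -sqrtr_sqr ler_sqrt ?sqr_ge0 //.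
have -> : \sum_(j | P j) (u j + v j) ^+ 2 = A + 2 * C + B.
  rewrite (eq_bigr (fun j => u j ^+ 2 + 2 * (u j * v j) + v j ^+ 2)); last by move=> j _; ring.
  by rewrite !big_split /= -mulr_sumr.
have : C <= Num.sqrt A * Num.sqrt B.
  rewrite -sqrtrM // (le_trans (ler_norm C)) // -sqrtr_sqr ler_sqrt ?mulr_ge0 //.
  exact: cauchy_schwarz.
rewrite sqrrD !sqr_sqrtr //; lra.
Qed.

End EuclideanSums.

Section Norms.
Variable R : realType.

Lemma normInf_ge0 n (v : 'cV[R]_n) : 0 <= normInf v.
Proof. by apply: (big_ind (fun t => 0 <= t)) => // u w u0; rewrite le_max u0. Qed.

Lemma normInf0 n : normInf (0 : 'cV[R]_n) = 0.
Proof. by rewrite /normInf; elim/big_rec: _ => // i t _ ->; rewrite mxE normr0 maxxx. Qed.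

Lemma normInf_mul_le n (v : 'cV[R]_n) a B : 0 <= a -> 0 <= B ->
  (forall i, `|v i 0| * a <= B) -> normInf v * a <= B.
Proof.
move=> a0 B0 vB; rewrite /normInf; elim/big_ind: _ => [|u w uB wB|i _]; rewrite ?mul0r //.
by rewrite maxr_pMl // ge_max uB.
Qed.

Lemma norm2_0 p : norm2 (0 : 'cV[R]_p) = 0.
Proof. by rewrite /norm2 big1 ?sqrtr0 // => i _; rewrite mxE expr0n. Qed.

Lemma norm2_scale p (a : R) (v : 'cV[R]_p) : norm2 (a *: v) = `|a| * norm2 v.
Proof.
rewrite /norm2; under eq_bigr do rewrite mxE exprMn.
by rewrite -mulr_sumr sqrtrM ?sqr_ge0 // sqrtr_sqr.
Qed.

Lemma norm2_restrict_le p (P : pred 'I_p) (v : 'cV[R]_p) :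
  Num.sqrt (\sum_(i | P i) v i 0 ^+ 2) <= norm2 v.
Proof.
rewrite ler_sqrt ?sum_sqr_ge0 // [leRHS](bigID P) /= lerDl.
exact: sum_sqr_ge0.
Qed.

Lemma norm_coord_le_norm2 p (v : 'cV[R]_p) i : `|v i 0| <= norm2 v.
Proof.
rewrite -sqrtr_sqr ler_sqrt ?sum_sqr_ge0 // (bigD1 i) //= lerDl.
exact: sum_sqr_ge0.
Qed.

Lemma norm2_eq0 p (v : 'cV[R]_p) : norm2 v = 0 -> v = 0.
Proof.
move=> v0; apply/matrixP => i j; rewrite ord1 mxE; apply/normr0_eq0/eqP.
by rewrite eq_le normr_ge0 -v0 norm_coord_le_norm2.
Qed.

Variables m n : nat.
Local Open Scope classical_set_scope.

Lemma specnorm_set_has_ubound (A : 'M[R]_(m, n)) :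
  has_ubound [set e : R | exists x : 'cV[R]_n, norm2 x <= 1 /\ e = norm2 (A *m x)].
Proof.
exists (\sum_(j < m) \sum_(i < n) `|A j i|) => _ [x [x1 ->]].
apply: le_trans (sqrt_sum_sqr_le_sum_norm _ _) _; apply: ler_sum => j _; rewrite mxE.
apply: le_trans (ler_norm_sum _ _ _) _; apply: ler_sum => i _.
by rewrite normrM ler_piMr // (le_trans (norm_coord_le_norm2 x i)).
Qed.

Lemma norm2_mulmx_le (A : 'M[R]_(m, n)) (v : 'cV[R]_n) :
  norm2 (A *m v) <= specnorm A * norm2 v.
Proof.
have [/norm2_eq0 ->|v_neq0] := eqVneq (norm2 v) 0.
  by rewrite mulmx0 !norm2_0 mulr0.
have v_gt0 : 0 < norm2 v by rewrite lt_def v_neq0 sqrtr_ge0.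
rewrite -ler_pdivrMr // mulrC -[_^-1]ger0_norm ?invr_ge0 ?sqrtr_ge0 //.
rewrite -norm2_scale scalemxAr; apply: (ub_le_sup (specnorm_set_has_ubound A)).
exists ((norm2 v)^-1 *: v); split=> //.
by rewrite norm2_scale ger0_norm ?invr_ge0 ?sqrtr_ge0 // mulVf.
Qed.

Lemma specnorm_ge0 (A : 'M[R]_(m, n)) : 0 <= specnorm A.
Proof.
apply: (ub_le_sup (specnorm_set_has_ubound A)).
by exists 0; rewrite mulmx0 !norm2_0 ler01.
Qed.

Lemma dist_col_ge0 (A : 'M[R]_(m, n)) V U k : 0 <= dist_col A V U k.
Proof.
by apply: lb_le_inf => [|_ [a ->]]; [by eexists; exists (fun=> 0) | exact: sqrtr_ge0].
Qed.

(* [(A_V d) / d k] is [A_V,k] minus a combination of the other columns of [A_V,U]. *)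
Lemma dist_col_mul_le (A : 'M[R]_(m, n)) V (U : {set 'I_n}) k (d : 'I_n -> R) : k \in U ->
  `|d k| * dist_col A V U k <= Num.sqrt (\sum_(j in V) (\sum_(i in U) A j i * d i) ^+ 2).
Proof.
move=> Uk; have [->|dk_neq0] := eqVneq (d k) 0; first by rewrite normr0 mul0r sqrtr_ge0.
have dk_gt0 : 0 < `|d k| by rewrite normr_gt0.
rewrite mulrC -ler_pdivlMr //; apply: (le_trans (ge_inf _ _)).
- by exists 0 => _ [a ->]; exact: sqrtr_ge0.
- by exists (fun i => - d i / d k).
rewrite -sqrtr_sqr -sqrtrV ?sqr_ge0 // -sqrtrM ?sum_sqr_ge0 // mulr_suml.
rewrite le_eqVlt; apply/predU1P; left; congr Num.sqrt.
apply: eq_bigr => j _; rewrite -exprVn -exprMn.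
have -> : \sum_(i in U :\ k) - d i / d k * A j i = - (\sum_(i in U :\ k) A j i * d i) / d k.
  by rewrite mulNr mulr_suml -sumrN; apply: eq_bigr => i _; ring.
by rewrite (big_setD1 _ Uk) /=; congr (_ ^+ 2); field.
Qed.

End Norms.

Section Slacks.
Variables (R : realType) (m n : nat).
Implicit Types (A : 'M[R]_(m, n)) (b : 'cV[R]_m) (c : 'rV[R]_n) (x : 'cV[R]_n) (y : 'rV[R]_m).

Definition slack A b x j := b j 0 - (A *m x) j 0.
Definition reduced_cost A c y i := (y *m A) 0 i - c 0 i.

Lemma primal_feasible_ge0 A b x i : primal_feasible A b x -> 0 <= x i 0.
Proof. by case=> _ /(_ i 0); rewrite mxE. Qed.

Lemma dual_feasible_ge0 A c y j : dual_feasible A c y -> 0 <= y 0 j.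
Proof. by case=> _ /(_ 0 j); rewrite mxE. Qed.

Lemma slack_ge0 A b x j : primal_feasible A b x -> 0 <= slack A b x j.
Proof. by case=> Axb _; rewrite subr_ge0; exact: Axb. Qed.

Lemma reduced_cost_ge0 A c y i : dual_feasible A c y -> 0 <= reduced_cost A c y i.
Proof. by case=> cyA _; rewrite subr_ge0; exact: cyA. Qed.

Lemma duality_gapE A b c x y :
  (y *m b) 0 0 - (c *m x) 0 0 =
  \sum_j y 0 j * slack A b x j + \sum_i reduced_cost A c y i * x i 0.
Proof.
have yAx : \sum_j y 0 j * (A *m x) j 0 = \sum_i (y *m A) 0 i * x i 0.
  by have /(congr1 (fun M : 'M_1 => M 0 0)) := mulmxA y A x; rewrite !mxE.
rewrite (eq_bigr (fun j => y 0 j * b j 0 - y 0 j * (A *m x) j 0)) => [|j _]; last exact: mulrBr.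
rewrite (eq_bigr (fun i => (y *m A) 0 i * x i 0 - c 0 i * x i 0)) => [|i _]; last exact: mulrBl.
by rewrite !sumrB yAx !mxE; ring.
Qed.

End Slacks.

Section Extended.
Variable R : realType.
Local Open Scope ereal_scope.

Lemma bigmine_le (I : finType) (P : pred I) (F : I -> \bar R) i :
  P i -> \big[mine/+oo]_(j | P j) F j <= F i.
Proof. by move=> Pi; rewrite (bigD1 i) //= ge_min lexx. Qed.

Lemma bigmine_ge0 (I : finType) (P : pred I) (F : I -> \bar R) :
  (forall i, P i -> 0 <= F i) -> 0 <= \big[mine/+oo]_(i | P i) F i.
Proof. by move=> F0; elim/big_ind: _ => // [|u v u0 v0]; rewrite ?leey ?le_min ?u0. Qed.

(* [p^-1] is [+oo] at [p = 0] and [0] at [p = +oo]. *)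
Lemma lee_mul_inve (N a : R) (p : \bar R) : (0 <= N)%R -> (0 < a)%R -> 0 <= p ->
  (forall t : R, (0 < t)%R -> t%:E <= p -> (N * t <= a)%R) -> N%:E <= a%:E * p^-1.
Proof.
move=> N0 a_gt0; case: p => [p||] //; rewrite ?lee_fin => p0 Nt.
- have [p_eq0|p_gt0] := eqVneq p 0%R; first by rewrite p_eq0 inve0 gt0_muley ?lte_fin ?leey.
  have {}p_gt0 : (0 < p)%R by rewrite lt_def p_gt0.
  by rewrite inver gt_eqF // -EFinM lee_fin ler_pdivlMr // Nt.
- rewrite mulr0 leNgt; apply/negP => N_gt0.
  have t_gt0 : (0 < (a + 1) / N)%R by rewrite divr_gt0 // ltr_wpDl ?ltW.
  by have := Nt _ t_gt0 (leey _); rewrite mulrCA divff ?gt_eqF // mulr1; lra.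
Qed.

End Extended.

Section LambdaGamma.
Variables (R : realType) (m n : nat) (A : 'M[R]_(m, n)) (b : 'cV[R]_m) (c : 'rV[R]_n).
Variables (xs : 'cV[R]_n) (ys : 'rV[R]_m).
Local Open Scope ereal_scope.

Lemma lambdaA_le_dual j : j \in Vset ys -> lambdaA A b c xs ys <= (ys 0 j)%:E.
Proof. by move=> Vj; rewrite !ge_min (bigmine_le _ Vj) orbT. Qed.

Lemma lambdaA_le_reduced_cost i :
  i \in ~: Uset xs -> lambdaA A b c xs ys <= (reduced_cost A c ys i)%:E.
Proof. by move=> Ui; rewrite !ge_min (bigmine_le _ Ui) !orbT. Qed.

Lemma lambdaA_ge0 : primal_feasible A b xs -> dual_feasible A c ys -> 0 <= lambdaA A b c xs ys.
Proof.
move=> xs_feas ys_feas; rewrite !le_min -!andbA; apply/and4P; split; apply: bigmine_ge0 => k.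
- by rewrite inE lee_fin => /ltW.
- by rewrite inE lee_fin => /ltW.
- by rewrite lee_fin => _; exact: slack_ge0.
- by rewrite lee_fin => _; exact: reduced_cost_ge0.
Qed.

Lemma gammaA_le_dist_col k :
  k \in Uset xs -> gammaA A xs ys <= (dist_col A (Vset ys) (Uset xs) k)%:E.
Proof. exact: bigmine_le. Qed.

Lemma gammaA_ge0 : 0 <= gammaA A xs ys.
Proof. by apply: bigmine_ge0 => k _; rewrite lee_fin dist_col_ge0. Qed.

Lemma mine_gammaA1E : exists2 G : R, (0 <= G <= 1)%R & mine (gammaA A xs ys) 1%:E = G%:E.
Proof.
have gam1 : mine (gammaA A xs ys) 1%:E <= 1%:E by rewrite ge_min lexx orbT.
have gam_fin : mine (gammaA A xs ys) 1%:E \is a fin_num.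
  by rewrite ge0_fin_numE ?(le_lt_trans gam1) ?ltey // le_min gammaA_ge0 lee01.
exists (fine (mine (gammaA A xs ys) 1%:E)); last by rewrite fineK.
by rewrite -!lee_fin fineK // gam1 le_min gammaA_ge0 lee01.
Qed.

End LambdaGamma.

Section ErrorBound.
Variables (R : realType) (m n : nat) (A : 'M[R]_(m, n)) (b : 'cV[R]_m) (c : 'rV[R]_n).
Variables (xs : 'cV[R]_n) (ys : 'rV[R]_m).
Hypotheses (xs_feas : primal_feasible A b xs) (ys_feas : dual_feasible A c ys).
Hypothesis no_gap : (ys *m b) 0 0 = (c *m xs) 0 0.

Local Notation U := (Uset xs).
Local Notation V := (Vset ys).

Lemma complementary_slackness j : j \in V -> slack A b xs j = 0.
Proof.
move=> Vj; have term_ge0 j' : 0 <= ys 0 j' * slack A b xs j'.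
  by rewrite mulr_ge0 ?slack_ge0 ?(dual_feasible_ge0 _ ys_feas).
have rc_ge0 i : 0 <= reduced_cost A c ys i * xs i 0.
  by rewrite mulr_ge0 ?reduced_cost_ge0 ?(primal_feasible_ge0 _ xs_feas).
have := duality_gapE A b c xs ys; rewrite no_gap subrr => /esym/eqP.
rewrite paddr_eq0 ?sumr_ge0 // => /andP [/eqP /(psumr_eq0P (fun j _ => term_ge0 j)) term0 _].
have /eqP := term0 j isT; rewrite mulf_eq0 => /orP [/eqP ys0|/eqP //].
by move: Vj; rewrite inE ys0 ltxx.
Qed.

Lemma xs_off_support i : i \in ~: U -> xs i 0 = 0.
Proof.
rewrite !inE -leNgt => xs_le0; apply/eqP; rewrite eq_le xs_le0.
exact: primal_feasible_ge0 xs_feas.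
Qed.

Variable x : 'cV[R]_n.
Hypothesis x_feas : primal_feasible A b x.

Local Notation gap := ((c *m (xs - x)) 0 0).
Local Notation S := (\sum_(j in V) slack A b x j).
Local Notation X := (\sum_(i in ~: U) x i 0).

Lemma gapE :
  gap = \sum_j ys 0 j * slack A b x j + \sum_i reduced_cost A c ys i * x i 0.
Proof. by rewrite mulmxBr_entry -no_gap (duality_gapE A). Qed.

Lemma gap_ge_slack L : (forall j, j \in V -> L <= ys 0 j) ->
  (forall i, i \in ~: U -> L <= reduced_cost A c ys i) -> L * (S + X) <= gap.
Proof.
move=> LV LU; rewrite gapE [in leRHS](bigID (mem V)) [in leRHS](bigID (mem (~: U))) /= mulrDr.
rewrite -[L * S]addr0 -[L * X]addr0; apply: lerD; apply: lerD.
- rewrite mulr_sumr; apply: ler_sum => j Vj.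
  by apply: ler_wpM2r; [exact: slack_ge0 | exact: LV].
- by apply: sumr_ge0 => j _; rewrite mulr_ge0 ?slack_ge0 ?(dual_feasible_ge0 _ ys_feas).
- rewrite mulr_sumr; apply: ler_sum => i Ui.
  by apply: ler_wpM2r; [exact: primal_feasible_ge0 x_feas | exact: LU].
- by apply: sumr_ge0 => i _; rewrite mulr_ge0 ?reduced_cost_ge0 ?(primal_feasible_ge0 _ x_feas).
Qed.

Lemma gap_ge0 : 0 <= gap.
Proof.
rewrite -(mul0r (S + X)); apply: gap_ge_slack => [j _|i _].
  exact: dual_feasible_ge0 ys_feas.
exact: reduced_cost_ge0.
Qed.

Lemma err_off_support i : i \in ~: U -> `|xs i 0 - x i 0| <= X.
Proof.
move=> Ui; rewrite xs_off_support // sub0r normrN ger0_norm ?(primal_feasible_ge0 _ x_feas) //.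
rewrite (bigD1 i) //= lerDl; apply: sumr_ge0 => ? _; exact: primal_feasible_ge0 x_feas.
Qed.

Lemma err_on_support i : i \in U ->
  `|xs i 0 - x i 0| * dist_col A V U i <= S + specnorm A * X.
Proof.
move=> Ui; apply: le_trans (dist_col_mul_le A V (fun k => xs k 0 - x k 0) Ui) _.
pose xbar := \col_k (if k \in U then 0 else x k 0).
have diffE j : j \in V ->
    \sum_(i in U) A j i * (xs i 0 - x i 0) = slack A b x j + (A *m xbar) j 0.
  move=> Vj; have /eqP := complementary_slackness Vj; rewrite subr_eq0 => /eqP bE.
  rewrite /slack bE !mxE -sumrB -big_split big_mkcond /=; apply: eq_bigr => k _.
  rewrite mxE; case: ifP => Uk; first by rewrite mulr0 addr0 mulrBr.
  by rewrite xs_off_support ?mulr0 ?sub0r ?addNr // inE Uk.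
under eq_bigr => j Vj do rewrite diffE //.
apply: le_trans (minkowski _ _ _) _; apply: lerD.
  by apply: sqrt_sum_sqr_le_sum => j _; exact: slack_ge0.
apply: le_trans (norm2_restrict_le _ _) _; apply: le_trans (norm2_mulmx_le _ _) _.
apply: (ler_wpM2l (specnorm_ge0 A)); apply: le_trans (sqrt_sum_sqr_le_sum_norm _ _) _.
rewrite [leRHS]big_mkcond; apply: ler_sum => k _; rewrite !mxE !inE.
by case: (0 < xs k 0); rewrite ?normr0 // ger0_norm // (primal_feasible_ge0 _ x_feas).
Qed.

Lemma err_mul_le i G : 0 <= G -> G <= 1 ->
  (forall k, k \in U -> G <= dist_col A V U k) ->
  `|xs i 0 - x i 0| * G <= (1 + specnorm A) * (S + X).
Proof.
move=> G0 G1 G_dist; have K0 := specnorm_ge0 A.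
have S0 : 0 <= S by apply: sumr_ge0 => ? _; exact: slack_ge0.
have X0 : 0 <= X by apply: sumr_ge0 => ? _; exact: primal_feasible_ge0 x_feas.
have [Ui|Ui] := boolP (i \in U).
  apply: le_trans (ler_wpM2l (normr_ge0 _) (G_dist i Ui)) _.
  apply: le_trans (err_on_support Ui) _.
  by have := mulr_ge0 K0 S0; rewrite mulrDl mul1r mulrDr; lra.
apply: le_trans (ler_piMr (normr_ge0 _) G1) _.
apply: le_trans (err_off_support _) _; first by rewrite inE.
by have := mulr_ge0 K0 (addr_ge0 S0 X0); rewrite mulrDl mul1r; lra.
Qed.

Lemma normInf_err_le L G : 0 <= L -> 0 <= G -> G <= 1 ->
  (forall j, j \in V -> L <= ys 0 j) ->
  (forall i, i \in ~: U -> L <= reduced_cost A c ys i) ->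
  (forall k, k \in U -> G <= dist_col A V U k) ->
  normInf (xs - x) * (L * G) <= gap * (1 + specnorm A).
Proof.
move=> L0 G0 G1 LV LU G_dist; have K1 : 0 <= 1 + specnorm A by rewrite addr_ge0 ?specnorm_ge0.
apply: normInf_mul_le; rewrite ?mulr_ge0 ?gap_ge0 //.
move=> i; rewrite [(xs - x) i 0]mxE [(- x) i 0]mxE mulrCA (mulrC gap).
apply: le_trans (ler_wpM2l L0 (err_mul_le i G0 G1 G_dist)) _.
by rewrite mulrCA ler_wpM2l // gap_ge_slack.
Qed.

Local Open Scope ereal_scope.

Lemma normInf_err_le_lambda_gamma (t : R) : (0 < t)%R ->
  t%:E <= lambdaA A b c xs ys * mine (gammaA A xs ys) 1%:E ->
  (normInf (xs - x) * t <= gap * (1 + specnorm A))%R.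
Proof.
move=> t_gt0; have [G /andP [G0 G1] gamE] := mine_gammaA1E A xs ys; rewrite gamE => t_le.
have G_gt0 : (0 < G)%R.
  rewrite lt_def G0 andbT; apply/eqP => G_eq0.
  by move: t_le; rewrite G_eq0 mule0 lee_fin leNgt t_gt0.
have L_le : (t / G)%:E <= lambdaA A b c xs ys by rewrite EFinM lee_pdivrMr.
suff : (normInf (xs - x) * (t / G * G) <= gap * (1 + specnorm A))%R by rewrite divfK ?gt_eqF.
apply: normInf_err_le => //.
- by rewrite divr_ge0 ?ltW.
- by move=> j Vj; rewrite -lee_fin (le_trans L_le) ?lambdaA_le_dual.
- by move=> i Ui; rewrite -lee_fin (le_trans L_le) ?lambdaA_le_reduced_cost.
- move=> k Uk; rewrite -lee_fin -gamE (le_trans _ (gammaA_le_dist_col _ _ Uk)) //.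
  by rewrite ge_min lexx.
Qed.

End ErrorBound.

Unset Implicit Arguments.

Theorem mainTheorem11 (R : realType) (m n : nat) (A : 'M[R]_(m, n))
  (b : 'cV[R]_m) (c : 'rV[R]_n) (xs : 'cV[R]_n) (ys : 'rV[R]_m) :
  primal_optimal A b c xs ->
  (forall x, primal_optimal A b c x -> x = xs) ->
  dual_optimal A b c ys ->
  (forall y, dual_optimal A b c y -> y = ys) ->
  forall x : 'cV[R]_n, primal_feasible A b x ->
  ((normInf (xs - x))%:E <=
     ((c *m (xs - x)) 0 0 * (1 + specnorm A))%:E *
     (lambdaA A b c xs ys * mine (gammaA A xs ys) 1%:E)^-1)%E.
Proof.
move=> xs_opt xs_unique ys_opt _ x x_feas.
have no_gap := strong_duality xs_opt ys_opt.
case: xs_opt ys_opt => [xs_feas xs_max] [ys_feas _].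
have [gap0|gap_neq0] := eqVneq ((c *m (xs - x)) 0 0) 0.
  have x_opt : primal_optimal A b c x.
    by split=> // x' /xs_max; move: gap0; rewrite mulmxBr_entry => /subr0_eq <-.
  by rewrite (xs_unique x x_opt) subrr normInf0 mulmx0 mxE mul0r mul0e.
have gap_gt0 : 0 < (c *m (xs - x)) 0 0 by rewrite lt_def gap_neq0 mulmxBr_entry subr_ge0 xs_max.
apply: lee_mul_inve; rewrite ?normInf_ge0 ?mulr_gt0 ?ltr_wpDr ?specnorm_ge0 //.
  by rewrite mule_ge0 ?lambdaA_ge0 // le_min gammaA_ge0 lee01.
exact: normInf_err_le_lambda_gamma.
Qed.
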